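(* The validation error at $\tilde C$ satisfies $$E_v(w^*_{\tilde C})\ge \frac1{n'}\Big(\#\{i:y'_i=+1,\ \hat w^\top x'_i+\delta(x'_i)<0\}+\#\{i:y'_i=-1,\ \hat w^\top x'_i-\gamma(x'_i)>0\}\Big)$$ and $$E_v(w^*_{\tilde C})\le 1-\frac1{n'}\Big(\#\{i:y'_i=+1,\ \hat w^\top x'_i-\gamma(x'_i)\ge0\}+\#\{i:y'_i=-1,\ \hat w^\top x'_i+\delta(x'_i)\le 0\}\Big).$$
   Context: Let $\{(x_i,y_i)\}_{i=1}^n\subset\mathbb R^d\times\{-1,1\}$ be a training set and $\{(x'_i,y'_i)\}_{i=1}^{n'}\subset\mathbb R^d\times\{-1,1\}$ a validation set. Let $\ell:\{-1,1\}\times\mathbb R\to\mathbb R$ be convex in its second argument, and set $\ell_i(w):=\ell(y_i,w^\top x_i)$. For $C>0$ let $w^*_C$ be the (unique) minimizer over $w\in\mathbb R^d$ of $P_C(w)=\frac12\|w\|^2+C\sum_{i=1}^n\ell_i(w)$. The validation error of $w\in\mathbb R^d$ is $E_v(w):=\frac1{n'}\#\{i\in\{1,\dots,n'\}: y'_iw^\top x'_i<0\}$ (a score exactly $0$ counts as correct). Fix $\tilde C>0$ and an arbitrary $\hat w\in\mathbb R^d$; for each $i$ let $\xi_i\in\partial\ell_i(\hat w)$, and set $g:=\hat w+\tilde C\sum_{i=1}^n\xi_i$. For $x\in\mathbb R^d$ define $\gamma(x):=\frac12(\|g\|\|x\|+g^\top x)$, $\delta(x):=\frac12(\|g\|\|x\|-g^\top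 x)$. *)

From HB Require Import structures.
From mathcomp Require Import all_boot all_order all_algebra.
Set Implicit Arguments. Unset Strict Implicit. Unset Printing Implicit Defensive.
Import Order.TTheory GRing.Theory Num.Theory.
Local Open Scope ring_scope.

Definition dotv (R : rcfType) (d : nat) (u v : 'rV[R]_d) : R :=
  \sum_(k < d) u 0 k * v 0 k.

Definition normv (R : rcfType) (d : nat) (u : 'rV[R]_d) : R :=
  Num.sqrt (dotv u u).

Definition convex_fun (R : rcfType) (f : R -> R) : Prop :=
  forall (a b t : R), 0 <= t -> t <= 1 ->
    f (t * a + (1 - t) * b) <= t * f a + (1 - t) * f b.

Definition subgradient (R : rcfType) (d : nat) (f : 'rV[R]_d -> R)
  (w0 xi : 'rV[R]_d) : Prop :=
  forall w, f w0 + dotv xi (w - w0) <= f w.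

Definition primal (R : rcfType) (d n : nat) (loss : R -> R -> R)
  (x : 'I_n -> 'rV[R]_d) (y : 'I_n -> R) (C : R) (w : 'rV[R]_d) : R :=
  (normv w) ^+ 2 / 2 + C * \sum_(i < n) loss (y i) (dotv w (x i)).

Definition val_err (R : rcfType) (d n' : nat)
  (x' : 'I_n' -> 'rV[R]_d) (y' : 'I_n' -> R) (w : 'rV[R]_d) : R :=
  #|[set i : 'I_n' | y' i * dotv w (x' i) < 0]|%:R / n'%:R.

Definition gam (R : rcfType) (d : nat) (g x : 'rV[R]_d) : R :=
  (normv g * normv x + dotv g x) / 2.
Definition del (R : rcfType) (d : nat) (g x : 'rV[R]_d) : R :=
  (normv g * normv x - dotv g x) / 2.

(* P := P_C~ is 1-strongly convex and g is a subgradient of P at w^, so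
   P(w* ) >= P(w^) + g.(w* - w^) + |w* - w^|^2/2, while quadratic growth around
   the minimizer gives P(w^) >= P(w* ) + |w* - w^|^2/2.  Adding the two puts w*
   in the ball |w* - w^ + g/2| <= |g|/2, and Cauchy-Schwarz turns this into
   w^.x - gamma(x) <= w*.x <= w^.x + delta(x) for every validation point x.
   Points whose sign these bounds force to be wrong (resp. right) are counted
   as errors (resp. non-errors). *)

From HB Require Import structures.
From mathcomp Require Import all_boot all_order all_algebra.
From mathcomp Require Import ring lra.
Set Implicit Arguments. Unset Strict Implicit. Unset Printing Implicit Defensive.
Import Order.TTheory GRing.Theory Num.Theory.
Local Open Scope ring_scope.

Section InnerProduct.
Context {R : rcfType} {d : nat}.
Implicit Types (u v w z : 'rV[R]_d).

Lemma dotvC u v : dotv u v = dotv v u.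
Proof. by apply: eq_bigr => k _; rewrite mulrC. Qed.

Lemma dotvDl u v w : dotv (u + v) w = dotv u w + dotv v w.
Proof. by rewrite /dotv -big_split; apply: eq_bigr => k _; rewrite !mxE mulrDl. Qed.

Lemma dotvZl a u w : dotv (a *: u) w = a * dotv u w.
Proof. by rewrite /dotv mulr_sumr; apply: eq_bigr => k _; rewrite !mxE mulrA. Qed.

Lemma dotvNl u w : dotv (- u) w = - dotv u w.
Proof. by rewrite -scaleN1r dotvZl mulN1r. Qed.

Lemma dotvBl u v w : dotv (u - v) w = dotv u w - dotv v w.
Proof. by rewrite dotvDl dotvNl. Qed.

Lemma dotvDr u v w : dotv w (u + v) = dotv w u + dotv w v.
Proof. by rewrite !(dotvC w) dotvDl. Qed.

Lemma dotvZr a u w : dotv w (a *: u) = a * dotv w u.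
Proof. by rewrite !(dotvC w) dotvZl. Qed.

Lemma dotvBr u v w : dotv w (u - v) = dotv w u - dotv w v.
Proof. by rewrite !(dotvC w) dotvBl. Qed.

Lemma dotv_suml (I : finType) (f : I -> 'rV[R]_d) w :
  dotv (\sum_i f i) w = \sum_i dotv (f i) w.
Proof.
rewrite /dotv exchange_big /=; apply: eq_bigr => k _.
by rewrite summxE mulr_suml.
Qed.

Lemma dotvvN u : dotv (- u) (- u) = dotv u u.
Proof. by rewrite dotvNl (dotvC u) dotvNl opprK. Qed.

Lemma dotvv_ge0 u : 0 <= dotv u u.
Proof. by apply: sumr_ge0 => k _; rewrite -expr2 sqr_ge0. Qed.

Lemma normv_ge0 u : 0 <= normv u.
Proof. exact: sqrtr_ge0. Qed.

Lemma normv_sqr u : normv u ^+ 2 = dotv u u.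
Proof. by rewrite /normv sqr_sqrtr // dotvv_ge0. Qed.

Lemma dotvv_eq0 u : dotv u u = 0 -> u = 0.
Proof.
move=> /eqP; rewrite psumr_eq0 => [/allP u0|k _]; last by rewrite -expr2 sqr_ge0.
apply/rowP => k; rewrite mxE; apply/eqP.
by have := u0 k (mem_index_enum k); rewrite implyTb mulf_eq0 orbb.
Qed.

Lemma dotv_sqr_le u v : dotv u v ^+ 2 <= dotv u u * dotv v v.
Proof.
have [/dotvv_eq0 ->|nz_v] := eqVneq (dotv v v) 0.
  have dotv0 w : dotv w 0 = 0 by rewrite /dotv big1 // => k _; rewrite mxE mulr0.
  by rewrite !dotv0 mulr0 expr0n.
have vv_gt0 : 0 < dotv v v by rewrite lt_def nz_v dotvv_ge0.
have := dotvv_ge0 (dotv v v *: u - dotv u v *: v).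
rewrite !dotvBl !dotvBr !dotvZl !dotvZr (dotvC v u).
have -> : forall A B C : R, B * (B * A) - B * (C * C) - (C * (B * C) - C * (C * B))
  = B * (A * B - C ^+ 2) by move=> A B C; ring.
by rewrite pmulr_rge0 // subr_ge0 mulrC.
Qed.

Lemma normr_dotv_le u v : `|dotv u v| <= normv u * normv v.
Proof.
rewrite -(@ler_pXn2r _ 2) // ?nnegrE ?normr_ge0 ?mulr_ge0 ?normv_ge0 //.
by rewrite exprMn !normv_sqr real_normK ?num_real // dotv_sqr_le.
Qed.

Lemma dotv_convex_comb t u v : let s := t *: u + (1 - t) *: v in
  dotv s s = t * dotv u u + (1 - t) * dotv v v - t * (1 - t) * dotv (u - v) (u - v).
Proof. by rewrite /= !(dotvBl, dotvBr, dotvDl, dotvDr, dotvZl, dotvZr) (dotvC v u); ring. Qed.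

End InnerProduct.

Definition convexv (R : rcfType) (d : nat) (f : 'rV[R]_d -> R) : Prop :=
  forall a b t, 0 <= t -> t <= 1 ->
    f (t *: a + (1 - t) *: b) <= t * f a + (1 - t) * f b.

Definition reg_obj (R : rcfType) (d : nat) (C : R) (L : 'rV[R]_d -> R)
  (w : 'rV[R]_d) : R :=
  normv w ^+ 2 / 2 + C * L w.

Section Convexity.
Context {R : rcfType} {d : nat}.

Lemma convexv_sum (I : finType) (f : I -> 'rV[R]_d -> R) :
  (forall i, convexv (f i)) -> convexv (fun w => \sum_i f i w).
Proof.
move=> f_cvx a b t t0 t1; rewrite !mulr_sumr -big_split.
by apply: ler_sum => i _; apply: f_cvx.
Qed.

Lemma convexv_dotv (f : R -> R) (z : 'rV[R]_d) :
  convex_fun f -> convexv (fun w => f (dotv w z)).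
Proof. by move=> f_cvx a b t t0 t1; rewrite dotvDl !dotvZl; apply: f_cvx. Qed.

Lemma subgradient_sum (I : finType) (f : I -> 'rV[R]_d -> R) w0 s :
  (forall i, subgradient (f i) w0 (s i)) ->
  subgradient (fun w => \sum_i f i w) w0 (\sum_i s i).
Proof.
move=> sg w; rewrite dotv_suml -big_split.
by apply: ler_sum => i _; apply: sg.
Qed.

Lemma ler_of_forall_scaled (a b : R) :
  (forall t, 0 < t -> t <= 1 -> (1 - t) * b <= a) -> b <= a.
Proof.
move=> ab; have a_ge0 : 0 <= a by have := ab 1 ltr01 (lexx 1); rewrite subrr mul0r.
rewrite leNgt; apply/negP => lt_ab.
have b_gt0 : 0 < b by apply: le_lt_trans lt_ab.
set t := (b - a) / (2 * b).
have t_gt0 : 0 < t by rewrite divr_gt0 ?mulr_gt0 ?subr_gt0.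
have t_le1 : t <= 1 by rewrite ler_pdivrMr ?mulr_gt0 // mul1r; lra.
have mid : (1 - t) * b = (a + b) / 2 by rewrite /t; field; rewrite gt_eqF.
by have := ab t t_gt0 t_le1; rewrite mid; lra.
Qed.
End Convexity.

Section RegularizedObjective.
Context {R : rcfType} {d : nat} (C : R) (L : 'rV[R]_d -> R).
Hypothesis C_ge0 : 0 <= C.
Local Notation P := (reg_obj C L).

Lemma reg_obj_subgradient_ineq w0 s w : subgradient L w0 s ->
  P w0 + dotv (w0 + C *: s) (w - w0) + dotv (w - w0) (w - w0) / 2 <= P w.
Proof.
move=> /(_ w) sg; rewrite /reg_obj !normv_sqr dotvDl dotvZl.
have -> : dotv w w = dotv w0 w0 + 2 * dotv w0 (w - w0) + dotv (w - w0) (w - w0).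
  by rewrite !(dotvBl, dotvBr) (dotvC w0 w); ring.
have := ler_wpM2l C_ge0 sg; rewrite mulrDr; lra.
Qed.

Lemma reg_obj_strongly_convex a b t : convexv L -> 0 <= t -> t <= 1 ->
  P (t *: a + (1 - t) *: b)
    <= t * P a + (1 - t) * P b - t * (1 - t) * dotv (a - b) (a - b) / 2.
Proof.
move=> L_cvx t0 t1; rewrite /reg_obj !normv_sqr dotv_convex_comb.
have := ler_wpM2l C_ge0 (L_cvx a b t t0 t1); rewrite !mulrDr; lra.
Qed.

Lemma reg_obj_quadratic_growth wmin w : convexv L ->
  (forall v, P wmin <= P v) -> P wmin + dotv (w - wmin) (w - wmin) / 2 <= P w.
Proof.
move=> L_cvx P_min; rewrite addrC -lerBrDr.
apply: ler_of_forall_scaled => t t0 t1.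
have := reg_obj_strongly_convex w wmin L_cvx (ltW t0) t1.
move=> /(le_trans (P_min _)); rewrite -subr_ge0.
have -> : t * P w + (1 - t) * P wmin - t * (1 - t) * dotv (w - wmin) (w - wmin) / 2
           - P wmin = t * (P w - P wmin - (1 - t) * (dotv (w - wmin) (w - wmin) / 2)).
  by ring.
by rewrite pmulr_rge0 // subr_ge0.
Qed.

Lemma reg_obj_minimizer_ball wmin w0 s : convexv L ->
  (forall v, P wmin <= P v) -> subgradient L w0 s ->
  dotv (w0 + C *: s) (wmin - w0) + dotv (wmin - w0) (wmin - w0) <= 0.
Proof.
move=> L_cvx P_min sg.
have := reg_obj_quadratic_growth w0 L_cvx P_min.
rewrite -opprB dotvvN.
have := reg_obj_subgradient_ineq wmin sg; lra.
Qed.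

End RegularizedObjective.

Section ScoreBounds.
Context {R : rcfType} {d : nat}.


Lemma dotv_in_ball (w0 wmin g z : 'rV[R]_d) :
  dotv g (wmin - w0) + dotv (wmin - w0) (wmin - w0) <= 0 ->
  `|dotv wmin z - (dotv w0 z - dotv g z / 2)| <= normv g * normv z / 2.
Proof.
move=> ball; set c := wmin - w0 + 2^-1 *: g.
have c_sqr : dotv c c <= (normv g / 2) ^+ 2.
  rewrite expr_div_n normv_sqr /c; move: (wmin - w0) ball => u ball.
  rewrite !(dotvDl, dotvDr, dotvZl, dotvZr) (dotvC u g).
  have := dotvv_ge0 g; lra.
have c_norm : normv c <= normv g / 2.
  by rewrite -(@ler_pXn2r _ 2) // ?nnegrE ?divr_ge0 ?normv_ge0 // normv_sqr.
have -> : dotv wmin z - (dotv w0 z - dotv g z / 2) = dotv c z.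
  by rewrite /c !(dotvBl, dotvDl, dotvZl); field.
apply: le_trans (normr_dotv_le c z) _.
by rewrite mulrAC ler_wpM2r ?normv_ge0.
Qed.

Lemma score_bounds (w0 wmin g z : 'rV[R]_d) :
  dotv g (wmin - w0) + dotv (wmin - w0) (wmin - w0) <= 0 ->
  dotv w0 z - gam g z <= dotv wmin z <= dotv w0 z + del g z.
Proof.
move=> /(dotv_in_ball z); rewrite ler_distl /gam /del => /andP[lo hi].
by apply/andP; split; lra.
Qed.

End ScoreBounds.

Lemma card_disjoint_subset_le (T : finType) (A B E : {set T}) :
  A :&: B = set0 -> A :|: B \subset E -> (#|A| + #|B| <= #|E|)%N.
Proof. by move=> AB0 /subset_leq_card; rewrite -cardsUI AB0 cards0 addn0. Qed.

Section Ratios.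
Context {R : numFieldType}.

Lemma ler_ratio (m k n : nat) : (m <= k)%N -> m%:R / n%:R <= k%:R / n%:R :> R.
Proof. by move=> mk; rewrite ler_wpM2r ?invr_ge0 ?ler0n ?ler_nat. Qed.

Lemma ratio_le_1_sub (k m n : nat) :
  (k + m <= n)%N -> k%:R / n%:R <= 1 - m%:R / n%:R :> R.
Proof.
move=> kmn; have [->|n_gt0] := posnP n; first by rewrite invr0 !mulr0 subr0.
by rewrite lerBrDr -mulrDl ler_pdivrMr ?ltr0n // mul1r -natrD ler_nat.
Qed.

End Ratios.

Theorem corollary2 (R : rcfType) (d n n' : nat)
  (x : 'I_n -> 'rV[R]_d) (y : 'I_n -> R)
  (x' : 'I_n' -> 'rV[R]_d) (y' : 'I_n' -> R)
  (loss : R -> R -> R)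
  (hy : forall i, y i = 1 \/ y i = -1)
  (hy' : forall i, y' i = 1 \/ y' i = -1)
  (hconv : forall yl : R, (yl = 1 \/ yl = -1) -> convex_fun (loss yl))
  (Ct : R) (hCt : 0 < Ct)
  (wstar : 'rV[R]_d)
  (hmin : forall w, primal loss x y Ct wstar <= primal loss x y Ct w)
  (what : 'rV[R]_d) (xi : 'I_n -> 'rV[R]_d)
  (hxi : forall i, subgradient (fun w => loss (y i) (dotv w (x i))) what (xi i)) :
  let g := what + Ct *: \sum_(i < n) xi i in
  (#|[set i : 'I_n' | (y' i == 1) && (dotv what (x' i) + del g (x' i) < 0)]|%:R
   + #|[set i : 'I_n' | (y' i == -1) && (dotv what (x' i) - gam g (x' i) > 0)]|%:R)
   / n'%:R <= val_err x' y' wstar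
  /\
  val_err x' y' wstar <=
  1 - (#|[set i : 'I_n' | (y' i == 1) && (dotv what (x' i) - gam g (x' i) >= 0)]|%:R
   + #|[set i : 'I_n' | (y' i == -1) && (dotv what (x' i) + del g (x' i) <= 0)]|%:R)
   / n'%:R.
Proof.
move=> g.
have L_cvx : convexv (fun w => \sum_(i < n) loss (y i) (dotv w (x i))).
  by apply: convexv_sum => i; apply/convexv_dotv/hconv/hy.
(* [primal loss x y Ct] is [reg_obj Ct] of the empirical loss, by conversion. *)
have ball := reg_obj_minimizer_ball (ltW hCt) L_cvx hmin (subgradient_sum hxi).
have bounds i := andP (score_bounds (x' i) ball).
have one_neq_m1 : (1 : R) != -1 by rewrite -subr_eq0 opprK (@pnatr_eq0 R 2).
rewrite /val_err -!natrD; set E := [set i | y' i * dotv wstar (x' i) < 0]; split.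
  apply/ler_ratio/card_disjoint_subset_le.
    apply/setP => i; rewrite !inE.
    by apply/negP => /andP[/andP[/eqP-> _] /andP[]]; rewrite (negPf one_neq_m1).
  apply/subsetP => i; have [lo hi] := bounds i; rewrite !inE.
  by case/orP => /andP[/eqP-> ?]; lra.
apply/ratio_le_1_sub; rewrite -[X in (_ <= X)%N]card_ord -(cardsC E).
rewrite leq_add2l; apply: card_disjoint_subset_le.
  apply/setP => i; rewrite !inE.
  by apply/negP => /andP[/andP[/eqP-> _] /andP[]]; rewrite (negPf one_neq_m1).
apply/subsetP => i; have [lo hi] := bounds i; rewrite !inE -leNgt.
by case/orP => /andP[/eqP-> ?]; lra.
Qed.
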